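(* Let $\{|0\rangle,|1\rangle,|2\rangle\}$ be the standard basis of $\mathbb C^3$ and consider the seven product states in $\mathbb C^3\otimes\mathbb C^3$: $|\psi_1\rangle=|0\rangle\otimes|0\rangle$, $|\psi_2\rangle=(|1\rangle+|2\rangle)\otimes|0\rangle$, $|\psi_3\rangle=(|1\rangle-|2\rangle)\otimes|0\rangle$, $|\psi_4\rangle=|0\rangle\otimes(|1\rangle+|2\rangle)$, $|\psi_5\rangle=|0\rangle\otimes(|1\rangle-|2\rangle)$, $|\psi_6\rangle=|1\rangle\otimes|1\rangle$, $|\psi_7\rangle=|2\rangle\otimes|2\rangle$. These states are perfectly distinguishable by one-way LOCC with Alice measuring first and by one-way LOCC with Bob measuring first, but they are not perfectly distinguishable by a product measurement.
   Context: One-way LOCC with Alice first: there exist positive semidefinite $Q_1,\dots,Q_N$ on $\mathcal H_A$ with $\sum_jQ_j=I$ and, for each $j$, positive semidefinite $R^{(j)}_1,\dots,R^{(j)}_r$ on $\mathcal H_B$ with $\sum_kR^{(j)}_k=I$, such that $\langle\psi_l|Q_j\otimes R^{(j)}_k|\psi_l\rangle=0$ for all $j$ and $k\ne l$; with Bob first, the same with the roles of the two factors exchanged. Perfect distinguishability by a product measurement: there exist positive semidefinite $A_1,\dots,A_p$ on $\mathcal H_A$ summing to $I$ and $B_1,\dots,B_q$ on $\mathcal H_B$ summing to $I$ such that for every pair $(a,b)$ at most one index $k$ satisfies $\langle\psi_k|A_a\otimes B_b|\psi_k\rangle\ne0$. Here $\mathcal H_A=\mathcal H_B=\mathbb C^3$,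 the first tensor factor being Alice's. *)

From HB Require Import structures.
From mathcomp Require Import all_boot all_order all_algebra all_field.
Set Implicit Arguments. Unset Strict Implicit. Unset Printing Implicit Defensive.
Import Order.TTheory GRing.Theory Num.Theory.
Local Open Scope ring_scope.

Definition dag (m n : nat) (A : 'M[algC]_(m, n)) : 'M[algC]_(n, m) :=
  (map_mx (fun z => z^*) A)^T.

Definition psd (n : nat) (A : 'M[algC]_n) : Prop :=
  dag A = A /\ forall v : 'cV[algC]_n, 0 <= (dag v *m A *m v) 0 0.

(* Kronecker (tensor) product on C^3 (x) C^3 = C^(3*3); the index 3*a+b
   corresponds to |a> (x) |b>, the first factor being Alice's. *)
Definition kron3 (A B : 'M[algC]_3) : 'M[algC]_(3 * 3) :=
  \matrix_(i, j) (A (inord (i %/ 3)) (inord (j %/ 3)) *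
                  B (inord (i %% 3)) (inord (j %% 3))).

Definition kronv3 (u v : 'cV[algC]_3) : 'cV[algC]_(3 * 3) :=
  \col_i (u (inord (i %/ 3)) 0 * v (inord (i %% 3)) 0).

Definition expect (n : nat) (psi : 'cV[algC]_n) (M : 'M[algC]_n) : algC :=
  (dag psi *m M *m psi) 0 0.

Definition ket (k : 'I_3) : 'cV[algC]_3 := delta_mx k 0.

(* the seven states psi_1, ..., psi_7 (indexed 0..6) *)
Definition psi (l : 'I_7) : 'cV[algC]_(3 * 3) :=
  match val l with
  | 0 => kronv3 (ket 0) (ket 0)
  | 1 => kronv3 (ket 1 + ket 2) (ket 0)
  | 2 => kronv3 (ket 1 - ket 2) (ket 0)
  | 3 => kronv3 (ket 0) (ket 1 + ket 2)
  | 4 => kronv3 (ket 0) (ket 1 - ket 2)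
  | 5 => kronv3 (ket 1) (ket 1)
  | _ => kronv3 (ket 2) (ket 2)
  end.

Definition oneway_LOCC_Alice_first (r : nat) (s : 'I_r -> 'cV[algC]_(3 * 3)) : Prop :=
  exists (N : nat) (Q : 'I_N -> 'M[algC]_3) (R : 'I_N -> 'I_r -> 'M[algC]_3),
    (forall j, psd (Q j)) /\ \sum_(j < N) Q j = 1%:M /\
    (forall j k, psd (R j k)) /\ (forall j, \sum_(k < r) R j k = 1%:M) /\
    (forall j k l, k != l -> expect (s l) (kron3 (Q j) (R j k)) = 0).

Definition oneway_LOCC_Bob_first (r : nat) (s : 'I_r -> 'cV[algC]_(3 * 3)) : Prop :=
  exists (N : nat) (Q : 'I_N -> 'M[algC]_3) (R : 'I_N -> 'I_r -> 'M[algC]_3),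
    (forall j, psd (Q j)) /\ \sum_(j < N) Q j = 1%:M /\
    (forall j k, psd (R j k)) /\ (forall j, \sum_(k < r) R j k = 1%:M) /\
    (forall j k l, k != l -> expect (s l) (kron3 (R j k) (Q j)) = 0).

Definition product_distinguishable (r : nat) (s : 'I_r -> 'cV[algC]_(3 * 3)) : Prop :=
  exists (p q : nat) (A : 'I_p -> 'M[algC]_3) (B : 'I_q -> 'M[algC]_3),
    (forall a, psd (A a)) /\ \sum_(a < p) A a = 1%:M /\
    (forall b, psd (B b)) /\ \sum_(b < q) B b = 1%:M /\
    (forall a b k k', expect (s k) (kron3 (A a) (B b)) != 0 ->
                      expect (s k') (kron3 (A a) (B b)) != 0 -> k = k').

From HB Require Import structures.
From mathcomp Require Import all_boot all_order all_algebra all_field.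
From mathcomp Require Import mxtens ring.
Import Order.TTheory GRing.Theory Num.Theory.
Set Implicit Arguments. Unset Strict Implicit. Unset Printing Implicit Defensive.
Local Open Scope ring_scope.

(** Both one-way protocols are explicit: the first party measures the basis
    [|0>, |1>+|2>, |1>-|2>] (up to normalisation), after which the three
    states still compatible with the outcome are orthogonal on the second
    party's side.  Against a product measurement [A_a (x) B_b], pick outcomes
    [a] with [<1|A_a|1> <> 0] and [b] with [<1|B_b|1> <> 0].  If [<2|A_a|2> = 0]
    then, [A_a] being positive, [A_a |2> = 0], so [A_a] cannot tell [|1>+|2>]
    from [|1>-|2>] and the outcome [(a, b')] with [<0|B_b'|0> <> 0] fires on
    both [psi_2] and [psi_3]; symmetrically for [B_b] with [psi_4], [psi_5].
    Otherwise [(a, b)] fires on both [psi_6] and [psi_7]. *)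

Section Adjoint.
Variables m n p : nat.
Implicit Types A B : 'M[algC]_(m, n).

Lemma dagD A B : dag (A + B) = dag A + dag B.
Proof. by apply/matrixP => i j; rewrite !mxE rmorphD. Qed.

Lemma dagN A : dag (- A) = - dag A.
Proof. by apply/matrixP => i j; rewrite !mxE rmorphN. Qed.

Lemma dagZ c A : dag (c *: A) = c^* *: dag A.
Proof. by apply/matrixP => i j; rewrite !mxE rmorphM. Qed.

Lemma dagK A : dag (dag A) = A.
Proof. by apply/matrixP => i j; rewrite !mxE conjCK. Qed.

Lemma dagM A (C : 'M[algC]_(n, p)) : dag (A *m C) = dag C *m dag A.
Proof.
apply/matrixP => i j; rewrite !mxE rmorph_sum; apply: eq_bigr => k _.
by rewrite !mxE rmorphM mulrC.
Qed.

End Adjoint.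

Lemma dag0 m n : dag (0 : 'M[algC]_(m, n)) = 0.
Proof. by rewrite -(scale0r 0) dagZ conjC0 !scale0r. Qed.

Definition sesq n (A : 'M[algC]_n) (v w : 'cV[algC]_n) : algC :=
  (dag v *m A *m w) 0 0.

Section SesquilinearForm.
Variables (n : nat) (A : 'M[algC]_n).

Lemma sesq_expand v w s :
  sesq A (v + s *: w) (v + s *: w) =
  sesq A v v + s * sesq A v w + s^* * sesq A w v + s^* * s * sesq A w w.
Proof.
rewrite /sesq dagD dagZ !mulmxDl !mulmxDr -!scalemxAl -!scalemxAr !mxE.
ring.
Qed.

Lemma sesq_herm v w : dag A = A -> sesq A w v = (sesq A v w)^*.
Proof.
move=> hermA; rewrite /sesq.
have -> : ((dag v *m A *m w) 0 0)^* = dag (dag v *m A *m w) 0 0 by rewrite !mxE.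
by rewrite !dagM dagK hermA mulmxA.
Qed.

(* If [<w|A|w> = 0] but [<v|A|w> = c <> 0], the vector [v + s w] with
   [s c = -(<v|A|v> + 1)] has negative expectation. *)
Lemma psd_sesq_null v w : psd A -> expect w A = 0 -> sesq A v w = 0.
Proof.
move=> [hermA posA] ww0; apply/eqP/negP => /negP c_neq0.
set c := sesq A v w in c_neq0; set e := sesq A v v.
have e_ge0 : 0 <= e := posA v.
pose s := - (e + 1) / c.
have sc : s * c = - (e + 1) by rewrite /s divfK.
have sc' : s^* * c^* = - (e + 1).
  by rewrite -rmorphM sc; apply: conj_Creal; rewrite rpredN rpredD ?real1 ?ger0_real.
have := posA (v + s *: w); rewrite -/(sesq A _ _) sesq_expand.
rewrite [sesq A w w]ww0 mulr0 addr0 (sesq_herm v w hermA) -/c -/e sc sc'.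
have -> : e + - (e + 1) + - (e + 1) = - (e + 2) by ring.
rewrite oppr_ge0 => e2_le0.
by have := lt_le_trans (ltr_wpDl e_ge0 (ltr0n _ 2)) e2_le0; rewrite ltxx.
Qed.

Lemma expect_add_null v w s :
  psd A -> expect w A = 0 -> expect (v + s *: w) A = expect v A.
Proof.
move=> psdA ww0.
have vw0 : sesq A v w = 0 by apply: psd_sesq_null.
have wv0 : sesq A w v = 0 by rewrite (sesq_herm _ _ psdA.1) vw0 conjC0.
change (sesq A (v + s *: w) (v + s *: w) = sesq A v v).
by rewrite sesq_expand vw0 wv0 [sesq A w w]ww0; ring.
Qed.

End SesquilinearForm.

Definition ip n (u v : 'cV[algC]_n) : algC := (dag u *m v) 0 0.

Section Expectation.
Variable n : nat.
Implicit Types (u v : 'cV[algC]_n) (M : 'M[algC]_n).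

Lemma ipDl u1 u2 v : ip (u1 + u2) v = ip u1 v + ip u2 v.
Proof. by rewrite /ip dagD mulmxDl mxE. Qed.

Lemma ipDr u v1 v2 : ip u (v1 + v2) = ip u v1 + ip u v2.
Proof. by rewrite /ip mulmxDr mxE. Qed.

Lemma ipNl u v : ip (- u) v = - ip u v.
Proof. by rewrite /ip dagN mulNmx mxE. Qed.

Lemma ipNr u v : ip u (- v) = - ip u v.
Proof. by rewrite /ip mulmxN mxE. Qed.

Lemma ip_conj u v : ip v u = (ip u v)^*.
Proof.
rewrite /ip; have -> : ((dag u *m v) 0 0)^* = dag (dag u *m v) 0 0 by rewrite !mxE.
by rewrite dagM dagK.
Qed.

Lemma expect0 u : expect u 0 = 0.
Proof. by rewrite /expect mulmx0 mul0mx mxE. Qed.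

Lemma expect1 u : expect u 1%:M = ip u u.
Proof. by rewrite /expect mulmx1. Qed.

Lemma expectZ u c M : expect u (c *: M) = c * expect u M.
Proof. by rewrite /expect -scalemxAr -scalemxAl mxE. Qed.

Lemma expectE u M : expect u M = \sum_i \sum_j (u i 0)^* * M i j * u j 0.
Proof.
rewrite /expect mxE exchange_big; apply: eq_bigr => j _.
by rewrite !mxE mulr_suml; apply: eq_bigr => i _; rewrite !mxE.
Qed.

Lemma expect_sum u k (F : 'I_k -> 'M[algC]_n) :
  expect u (\sum_(a < k) F a) = \sum_(a < k) expect u (F a).
Proof. by rewrite /expect mulmx_sumr mulmx_suml summxE. Qed.

Lemma povm_outcome_neq0 u k (F : 'I_k -> 'M[algC]_n) :
  \sum_(a < k) F a = 1%:M -> ip u u != 0 -> exists a, expect u (F a) != 0.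
Proof.
move=> sumF uu_neq0; apply/existsP; apply: contraNT uu_neq0.
rewrite negb_exists => /forallP F0.
by rewrite -expect1 -sumF expect_sum big1 // => a _; apply/eqP/negbNE/F0.
Qed.

Lemma psd0 : psd (0 : 'M[algC]_n).
Proof. by split=> [|v]; rewrite ?dag0 // -/(expect v 0) expect0. Qed.

Lemma psdZ c M : 0 <= c -> psd M -> psd (c *: M).
Proof.
move=> c_ge0 [hermM posM]; split; first by rewrite dagZ geC0_conj // hermM.
by move=> v; rewrite -/(expect v _) expectZ mulr_ge0 //; apply: posM.
Qed.

Definition proj v : 'M[algC]_n := v *m dag v.

Lemma expect_proj u v : expect u (proj v) = ip u v * ip v u.
Proof.
rewrite /expect /proj.
have -> : dag u *m (v *m dag v) *m u = (dag u *m v) *m (dag v *m u) by rewrite !mulmxA.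
by rewrite mxE big_ord1.
Qed.

Lemma psd_proj v : psd (proj v).
Proof.
split=> [|w]; first by rewrite /proj dagM dagK.
by rewrite -/(expect w _) expect_proj (ip_conj w v) mul_conjC_ge0.
Qed.

Definition hproj v : 'M[algC]_n := 2^-1 *: proj v.

Lemma psd_hproj v : psd (hproj v).
Proof. by apply: psdZ (psd_proj v); rewrite invr_ge0 ler0n. Qed.

Lemma hproj_addB u v : hproj (u + v) + hproj (u - v) = proj u + proj v.
Proof.
rewrite /hproj /proj !dagD dagN !(mulmxDl, mulmxDr, mulNmx, mulmxN).
by apply/matrixP => i j; rewrite !mxE; field.
Qed.

End Expectation.

Lemma expect_kron3 u v A B :
  expect (kronv3 u v) (kron3 A B) = expect u A * expect v B.
Proof.
have div3 (k : 'I_(3 * 3)) : inord (k %/ 3)%N = (mxtens_unindex k).1.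
  by apply: val_inj; rewrite /= inordK // mxtens_index_proof1.
have mod3 (k : 'I_(3 * 3)) : inord (k %% 3)%N = (mxtens_unindex k).2.
  by apply: val_inj; rewrite /= inordK // mxtens_index_proof2.
rewrite !expectE mulr_sum; apply: eq_bigr => k _.
rewrite mulr_sum; apply: eq_bigr => l _.
by rewrite !mxE !div3 !mod3 rmorphM; ring.
Qed.

Lemma dag_ket i : dag (ket i) = delta_mx 0 i.
Proof.
apply/matrixP => a b; rewrite !mxE.
by case: (_ == _); case: (_ == _); rewrite /= ?conjC1 ?conjC0.
Qed.

Lemma ip_ket i j : ip (ket i) (ket j) = (i == j)%:R.
Proof.
rewrite /ip dag_ket /ket mul_delta_mx_cond.
by case: (i == j); rewrite ?mulr1n ?mulr0n !mxE.
Qed.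

Lemma ip_ket_neq0 i : ip (ket i) (ket i) != 0.
Proof. by rewrite ip_ket eqxx oner_neq0. Qed.

Lemma proj_ket_sum : proj (ket 0) + proj (ket 1) + proj (ket 2) = 1%:M.
Proof.
have proj_ket i : proj (ket i) = delta_mx i i by rewrite /proj dag_ket mul_delta_mx.
rewrite mx1_sum_delta !big_ord_recl big_ord0 addr0 !proj_ket addrA.
by congr (_ + _ + _); apply/matrixP => a b; rewrite !mxE.
Qed.

Lemma proj_ket_hproj_sum :
  proj (ket 0) + hproj (ket 1 + ket 2) + hproj (ket 1 - ket 2) = 1%:M.
Proof. by rewrite -addrA hproj_addB addrA proj_ket_sum. Qed.

(* After the first outcome [j], the second party's outcome [k] names the state
   [psi k]; unused outcomes are the zero operator.  Outcome [0] of the first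
   measurement leaves [psi 0, psi 3, psi 4] (resp. [psi 0, psi 1, psi 2]),
   outcomes [1] and [2] leave [psi 5, psi 6] and one of the remaining two. *)
Definition first_meas (j : nat) : 'M[algC]_3 :=
  match j with
  | 0 => proj (ket 0) | 1 => hproj (ket 1 + ket 2) | _ => hproj (ket 1 - ket 2)
  end.

Definition bob_second (j k : nat) : 'M[algC]_3 :=
  match j, k with
  | 0, 0 => proj (ket 0) | 0, 3 => hproj (ket 1 + ket 2) | 0, 4 => hproj (ket 1 - ket 2)
  | 1, 1 => proj (ket 0) | 1, 5 => proj (ket 1) | 1, 6 => proj (ket 2)
  | 2, 2 => proj (ket 0) | 2, 5 => proj (ket 1) | 2, 6 => proj (ket 2)
  | _, _ => 0
  end.

Definition alice_second (j k : nat) : 'M[algC]_3 :=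
  match j, k with
  | 0, 0 => proj (ket 0) | 0, 1 => hproj (ket 1 + ket 2) | 0, 2 => hproj (ket 1 - ket 2)
  | 1, 3 => proj (ket 0) | 1, 5 => proj (ket 1) | 1, 6 => proj (ket 2)
  | 2, 4 => proj (ket 0) | 2, 5 => proj (ket 1) | 2, 6 => proj (ket 2)
  | _, _ => 0
  end.

Ltac psd_case := first [exact: psd_proj | exact: psd_hproj | exact: psd0].

Lemma psd_first_meas j : psd (first_meas j).
Proof. by case: j => [|[|j]]; psd_case. Qed.

Lemma psd_bob_second j k : psd (bob_second j k).
Proof. by case: j => [|[|[|j]]]; case: k => [|[|[|[|[|[|[|k]]]]]]]; psd_case. Qed.

Lemma psd_alice_second j k : psd (alice_second j k).
Proof. by case: j => [|[|[|j]]]; case: k => [|[|[|[|[|[|[|k]]]]]]]; psd_case. Qed.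

Lemma sum_first_meas : \sum_(j < 3) first_meas j = 1%:M.
Proof. by rewrite !big_ord_recr big_ord0 /= add0r proj_ket_hproj_sum. Qed.

Lemma sum_bob_second (j : 'I_3) : \sum_(k < 7) bob_second j k = 1%:M.
Proof.
case: j => [[|[|[|j]]] // hj]; rewrite !big_ord_recr big_ord0 /= ?add0r ?addr0.
- exact: proj_ket_hproj_sum.
- exact: proj_ket_sum.
- exact: proj_ket_sum.
Qed.

Lemma sum_alice_second (j : 'I_3) : \sum_(k < 7) alice_second j k = 1%:M.
Proof.
case: j => [[|[|[|j]]] // hj]; rewrite !big_ord_recr big_ord0 /= ?add0r ?addr0.
- exact: proj_ket_hproj_sum.
- exact: proj_ket_sum.
- exact: proj_ket_sum.
Qed.

Ltac expect_psi_case :=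
  rewrite /psi /= expect_kron3 ?expect0 ?mulr0 ?mul0r //;
  rewrite /hproj ?expectZ ?expect_proj;
  rewrite ?(ipDl, ipDr, ipNl, ipNr, ip_ket) /=; ring.

Lemma bob_second_excludes (j : 'I_3) (k l : 'I_7) : k != l ->
  expect (psi l) (kron3 (first_meas j) (bob_second j k)) = 0.
Proof.
case: j => [[|[|[|j]]] hj] //; case: k => [[|[|[|[|[|[|[|k]]]]]]] hk] //;
case: l => [[|[|[|[|[|[|[|l]]]]]]] hl] //= _; expect_psi_case.
Qed.

Lemma alice_second_excludes (j : 'I_3) (k l : 'I_7) : k != l ->
  expect (psi l) (kron3 (alice_second j k) (first_meas j)) = 0.
Proof.
case: j => [[|[|[|j]]] hj] //; case: k => [[|[|[|[|[|[|[|k]]]]]]] hk] //;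
case: l => [[|[|[|[|[|[|[|l]]]]]]] hl] //= _; expect_psi_case.
Qed.

Lemma psi_oneway_Alice_first : oneway_LOCC_Alice_first psi.
Proof.
exists 3, (fun j => first_meas j), (fun j k => bob_second j k).
split=> [j|]; first exact: psd_first_meas.
split; first exact: sum_first_meas.
split=> [j k|]; first exact: psd_bob_second.
by split; [exact: sum_bob_second | exact: bob_second_excludes].
Qed.

Lemma psi_oneway_Bob_first : oneway_LOCC_Bob_first psi.
Proof.
exists 3, (fun j => first_meas j), (fun j k => alice_second j k).
split=> [j|]; first exact: psd_first_meas.
split; first exact: sum_first_meas.
split=> [j k|]; first exact: psd_alice_second.
by split; [exact: sum_alice_second | exact: alice_second_excludes].
Qed.

Lemma expect_pm_null (A : 'M[algC]_3) : psd A -> expect (ket 2) A = 0 ->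
  expect (ket 1 + ket 2) A = expect (ket 1) A /\
  expect (ket 1 - ket 2) A = expect (ket 1) A.
Proof.
move=> psdA A2; split; first by rewrite -[ket 2]scale1r expect_add_null.
by rewrite -scaleN1r expect_add_null.
Qed.

Lemma psi_not_product_distinguishable : ~ product_distinguishable psi.
Proof.
move=> [p [q [A [B [psdA [sumA [psdB [sumB excl]]]]]]]].
have clash a b (k l : 'I_7) : k != l ->
    expect (psi k) (kron3 (A a) (B b)) != 0 ->
    expect (psi l) (kron3 (A a) (B b)) != 0 -> False.
  by move=> /eqP k_neq_l Ek El; apply: k_neq_l; exact: excl Ek El.
have [a0 A0] := povm_outcome_neq0 sumA (ip_ket_neq0 0).
have [a1 A1] := povm_outcome_neq0 sumA (ip_ket_neq0 1).
have [b0 B0] := povm_outcome_neq0 sumB (ip_ket_neq0 0).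
have [b1 B1] := povm_outcome_neq0 sumB (ip_ket_neq0 1).
have [A2|A2] := eqVneq (expect (ket 2) (A a1)) 0.
  have [Ap Am] := expect_pm_null (psdA a1) A2.
  apply: (clash a1 b0 (@Ordinal 7 1 isT) (@Ordinal 7 2 isT)) => //;
    by rewrite /psi /= expect_kron3 ?Ap ?Am mulf_neq0.
have [B2|B2] := eqVneq (expect (ket 2) (B b1)) 0.
  have [Bp Bm] := expect_pm_null (psdB b1) B2.
  apply: (clash a0 b1 (@Ordinal 7 3 isT) (@Ordinal 7 4 isT)) => //;
    by rewrite /psi /= expect_kron3 ?Bp ?Bm mulf_neq0.
apply: (clash a1 b1 (@Ordinal 7 5 isT) (@Ordinal 7 6 isT)) => //;
  by rewrite /psi /= expect_kron3 mulf_neq0.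
Qed.

Theorem mainTheorem5 :
  oneway_LOCC_Alice_first psi /\ oneway_LOCC_Bob_first psi /\
  ~ product_distinguishable psi.
Proof.
split; first exact: psi_oneway_Alice_first.
split; first exact: psi_oneway_Bob_first.
exact: psi_not_product_distinguishable.
Qed.
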